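(* Let $d\ge 1$ and let $G$ be an undirected graph. (i) If $C$ is a clique of $G$ with at least $2d+1$ vertices, then $C$ is monochromatic. (ii) If $X$ and $Y$ are monochromatic sets with $X\cap Y\neq\emptyset$, then $X\cup Y$ is monochromatic. (iii) If a vertex $u$ has more than $d$ neighbors in a monochromatic set $X$, then $X\cup\{u\}$ is monochromatic. (iv) If $T\subseteq V(G)$ is such that more than $2d$ vertices of $V(G)\setminus T$ have neighborhoods containing $T$, then $T$ is monochromatic.
   Context: All graphs are finite, simple and undirected. A cut of $G$ is a partition $(A,B)$ of $V(G)$ into two nonempty sets. A cut $(A,B)$ is a $d$-cut if every vertex of $A$ has at most $d$ neighbors in $B$ and every vertex of $B$ has at most $d$ neighbors in $A$. A set $T\subseteq V(G)$ is monochromatic if for every $d$-cut $(A,B)$ of $G$, either $T\subseteq A$ or $T\subseteq B$. *)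

From mathcomp Require Import all_boot.
Set Implicit Arguments. Unset Strict Implicit. Unset Printing Implicit Defensive.

Definition simple_graph (V : finType) (e : rel V) : Prop :=
  symmetric e /\ irreflexive e.

Definition nbrs_in (V : finType) (e : rel V) (x : V) (S : {set V}) : {set V} :=
  [set y in S | e x y].

Definition is_cut (V : finType) (A B : {set V}) : Prop :=
  A != set0 /\ B != set0 /\ A :&: B = set0 /\ A :|: B = setT.

Definition is_dcut (V : finType) (e : rel V) (d : nat) (A B : {set V}) : Prop :=
  is_cut A B /\
  (forall x, x \in A -> #|nbrs_in e x B| <= d) /\
  (forall x, x \in B -> #|nbrs_in e x A| <= d).

Definition monochromatic (V : finType) (e : rel V) (d : nat) (T : {set V}) : Prop :=
  forall A B : {set V}, is_dcut e d A B -> T \subset A \/ T \subset B.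

Definition is_clique (V : finType) (e : rel V) (C : {set V}) : Prop :=
  forall x y, x \in C -> y \in C -> x != y -> e x y.

Definition nbhd (V : finType) (e : rel V) (x : V) : {set V} := [set y | e x y].

(* Parts (i) and (iv) rest on one counting fact: if a d-cut (A, B) separates
   a ∈ A from b ∈ B, then any set S whose vertices in B are adjacent to a and
   whose vertices in A are adjacent to b has at most d elements on each side,
   so |S| <= 2d.  A big clique, or more than 2d common neighbours of T, is such
   an S for any two vertices a, b of the set in question.  For (iii), a vertex
   with more than d neighbours in A cannot lie in B. *)
From mathcomp Require Import all_boot.
From mathcomp Require Import zify.

Set Implicit Arguments.
Unset Strict Implicit.
Unset Printing Implicit Defensive.

Section DCuts.

Variables (V : finType) (e : rel V) (d : nat).
Implicit Types (A B S T X Y : {set V}) (a b u : V).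

Lemma cut_setC A B : is_cut A B -> B = ~: A.
Proof.
case=> _ [_ [AB0 ABT]]; apply/setP=> x; rewrite inE.
have := congr1 (fun S => x \in S) AB0; have := congr1 (fun S => x \in S) ABT.
by rewrite !inE; case: (x \in A); case: (x \in B).
Qed.

Lemma dcut_sym A B : is_dcut e d A B -> is_dcut e d B A.
Proof.
case=> [[A0 [B0 [AB0 ABT]]] [degA degB]].
by split; [rewrite /is_cut setIC setUC | split].
Qed.

Lemma dcut_side_of_nbrs A B u : is_dcut e d A B -> d < #|nbrs_in e u A| -> u \in A.
Proof.
move=> [cutAB [_ degB]] many_nbrs; rewrite -[u \in A]negbK -in_setC -(cut_setC cutAB).
by apply/negP=> /degB; rewrite leqNgt many_nbrs.
Qed.

Lemma dcut_card_le A B S a b :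
  is_dcut e d A B -> a \in A -> b \in B ->
  {in S :&: B, forall y, e a y} -> {in S :&: A, forall y, e b y} ->
  #|S| <= 2 * d.
Proof.
move=> [cutAB [degA degB]] aA bB adj_a adj_b.
have SB_le : #|S :&: B| <= d.
  apply: leq_trans (degA a aA); apply/subset_leq_card/subsetP=> y yS.
  by rewrite inE adj_a // andbT; case/setIP: yS.
have SA_le : #|S :&: A| <= d.
  apply: leq_trans (degB b bB); apply/subset_leq_card/subsetP=> y yS.
  by rewrite inE adj_b // andbT; case/setIP: yS.
rewrite -(cardsID A S) setDE -(cut_setC cutAB); lia.
Qed.

Lemma monochromatic_of_unsplit T :
  (forall A B a b, is_dcut e d A B -> a \in T -> b \in T -> a \in A -> b \in B -> False) ->
  monochromatic e d T.
Proof.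
move=> unsplit A B cutAB; have BE := cut_setC cutAB.1.
have [|/subsetPn [a aT aNA]] := boolP (T \subset A); [by left | right].
apply/subsetP=> b bT; rewrite BE inE; apply/negP=> bA.
by apply: (unsplit A B b a cutAB bT aT bA); rewrite BE inE.
Qed.

Lemma clique_monochromatic C :
  is_clique e C -> 2 * d < #|C| -> monochromatic e d C.
Proof.
move=> cliqueC big; apply: monochromatic_of_unsplit => A B a b cutAB aC bC aA bB.
have BE := cut_setC cutAB.1.
suff : #|C| <= 2 * d by rewrite leqNgt big.
apply: (dcut_card_le cutAB aA bB) => y /setIP [yC yS]; apply: cliqueC => //.
- by apply: contraTneq yS => <-; rewrite BE inE aA.
- by apply: contraTneq yS => <-; move: bB; rewrite BE inE.
Qed.

Lemma monochromaticU X Y :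
  monochromatic e d X -> monochromatic e d Y -> X :&: Y != set0 ->
  monochromatic e d (X :|: Y).
Proof.
move=> monoX monoY /set0Pn [x /setIP [xX xY]] A B cutAB.
have BE := cut_setC cutAB.1.
have sides_disj : x \in A -> x \in B -> False by rewrite BE inE => ->.
have [XA|XB] := monoX A B cutAB; have [YA|YB] := monoY A B cutAB.
- by left; rewrite subUset XA YA.
- by case: sides_disj; [apply: (subsetP XA) | apply: (subsetP YB)].
- by case: sides_disj; [apply: (subsetP YA) | apply: (subsetP XB)].
- by right; rewrite subUset XB YB.
Qed.

Lemma monochromaticU1 X u :
  monochromatic e d X -> d < #|nbrs_in e u X| -> monochromatic e d (u |: X).
Proof.
move=> monoX many_nbrs A B cutAB.
have side A' B' : is_dcut e d A' B' -> X \subset A' -> u |: X \subset A'.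
  move=> cutAB' XA'; rewrite subUset sub1set XA' andbT.
  apply: (dcut_side_of_nbrs cutAB'); apply: leq_trans many_nbrs _.
  apply/subset_leq_card/subsetP=> y; rewrite !inE => /andP [yX ->].
  by rewrite (subsetP XA' y yX).
have [XA|XB] := monoX A B cutAB; [left | right]; first exact: side cutAB XA.
exact: side (dcut_sym cutAB) XB.
Qed.

Lemma common_nbrs_monochromatic T :
  symmetric e -> 2 * d < #|[set v in ~: T | T \subset nbhd e v]| ->
  monochromatic e d T.
Proof.
move=> esym big; apply: monochromatic_of_unsplit => A B a b cutAB aT bT aA bB.
suff : #|[set v in ~: T | T \subset nbhd e v]| <= 2 * d by rewrite leqNgt big.
apply: (dcut_card_le cutAB aA bB) => y; rewrite !inE => /andP [/andP [_ /subsetP Ty] _];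
  by rewrite esym; move: (Ty a aT) (Ty b bT); rewrite !inE.
Qed.

End DCuts.

Theorem lemma6 (V : finType) (e : rel V) (d : nat) :
  simple_graph e -> 1 <= d ->
  (forall C : {set V}, is_clique e C -> 2 * d + 1 <= #|C| -> monochromatic e d C) /\
  (forall X Y : {set V}, monochromatic e d X -> monochromatic e d Y ->
     X :&: Y != set0 -> monochromatic e d (X :|: Y)) /\
  (forall (X : {set V}) (u : V), monochromatic e d X ->
     d < #|nbrs_in e u X| -> monochromatic e d (u |: X)) /\
  (forall T : {set V},
     2 * d < #|[set v in ~: T | T \subset nbhd e v]| -> monochromatic e d T).
Proof.
move=> [esym _] _; split; [|split; [|split]].
- by move=> C cliqueC; rewrite addn1; apply: clique_monochromatic.
- exact: monochromaticU.
- exact: monochromaticU1.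
- by move=> T; apply: common_nbrs_monochromatic.
Qed.
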